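(* Let $\mathcal{G}\subset\mathcal{S}$ with harmonic analogue $\mathcal{G}_H^0$. Suppose $p$ is a function of $n$ such that the Taylor coefficients $a_n(f)$ of every $f\in\mathcal{G}$ satisfy $|a_n(f)|\le p(n)$ for $n=2,3,\dots$. Then: (a) for every $f=h+\bar g\in\mathcal{G}_H^0$, the Taylor coefficients $A_n(f)$ of $h$ and $B_n(f)$ of $g$ satisfy $\big||A_n(f)|-|B_n(f)|\big|\le p(n)$ for $n=2,3,\dots$; (b) if $h_0\in\mathcal{G}$ has Taylor coefficients with $|a_n(h_0)|=p(n)$ for all $n=2,3,\dots$, then for an analytic function $g_0$ in $\mathbb{D}$, the harmonic function $f_0=h_0+\bar g_0$ belongs to $\mathcal{G}_H^0$ if and only if $g_0\equiv0$.
   Context: $\mathbb{D}$ is the open unit disk. $\mathcal{S}$ is the class of analytic univalent functions $f$ in $\mathbb{D}$ with $f(0)=0$, $f'(0)=1$. For $\mathcal{G}\subset\mathcal{S}$, its harmonic analogue $\mathcal{G}_H^0$ is the class of harmonic functions $f=h+\bar g$ ($h,g$ analytic in $\mathbb{D}$) such that $h+\epsilon g\in\mathcal{G}$ for every $\epsilon\in\mathbb{C}$ with $|\epsilon|=1$. *)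

From HB Require Import structures.
From mathcomp Require Import all_boot all_order all_algebra.
From mathcomp Require Import all_classical all_reals all_analysis.
From mathcomp Require Import complex.
Import Order.TTheory GRing.Theory Num.Theory.
Import numFieldTopology.Exports numFieldNormedType.Exports.

(* Topology on R[i] given by its complex modulus (the numClosedFieldType metric). *)
HB.instance Definition _ (R : rcfType) := PseudoPointedMetric.copy R[i] (R[i])^o.

Set Implicit Arguments.
Unset Strict Implicit.
Unset Printing Implicit Defensive.

Local Open Scope ring_scope.
Local Open Scope classical_set_scope.

Definition disk (R : realType) := {z : R[i] | `|z| < 1}.

Definition taylor_coefs (R : realType) (f : disk R -> R[i]) (a : nat -> R[i]) : Prop :=
  forall z : disk R,
    (fun N : nat => \sum_(k < N) a k * (sval z) ^+ k) @ \oo --> (f z : R[i]).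

Definition analytic_disk (R : realType) (f : disk R -> R[i]) : Prop :=
  exists a, taylor_coefs f a.

Definition classS (R : realType) (f : disk R -> R[i]) : Prop :=
  injective f /\
  exists a, taylor_coefs f a /\ a 0%N = 0 /\ a 1%N = 1.

(* Harmonic analogue G_H^0 of a class G: the harmonic functions f = h + conj g,
   represented by the pair (h, g) of analytic functions, such that
   h + eps g belongs to G for every unimodular eps. *)
Definition harmonic_analogue (R : realType) (G : (disk R -> R[i]) -> Prop)
    (h g : disk R -> R[i]) : Prop :=
  analytic_disk h /\ analytic_disk g /\
  forall eps : R[i], `|eps| = 1 -> G (fun z => h z + eps * g z).

From HB Require Import structures.
From mathcomp Require Import all_boot all_order all_algebra.
From mathcomp Require Import all_classical all_reals all_analysis.
From mathcomp Require Import complex.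
From mathcomp Require Import ring.
Import Order.TTheory GRing.Theory Num.Theory.
Import numFieldNormedType.Exports.
Local Open Scope ring_scope.
Local Open Scope complex_scope.
Local Open Scope classical_set_scope.

(* Choosing the unimodular [e] that aligns [e * B_n] with [A_n] (resp. with
   [-A_n]) makes [|A_n + e B_n|] equal to [|A_n| + |B_n|] (resp. [||A_n| - |B_n||]);
   as [h + e g] lies in [G], this is at most [p n], which gives (a), and when
   [|A_n| = p n] it forces [B_n = 0] for [n >= 2].  Since [h + g] and [h - g] are
   both normalised members of S, also [g 0 = 0] and [B_1 = 0]; the latter needs
   uniqueness of the first Taylor coefficient, which holds because a power series
   vanishing on the disk satisfies [c_1 t = O(t^2)] as [t -> 0+]. *)

Section NumFacts.
Context {F : numFieldType}.

Lemma addr_eq_subr_eq0 (x y : F) : x + y = x - y -> y = 0.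
Proof.
move=> e; have : (x + y) - (x - y) = y *+ 2 by ring.
by rewrite e subrr => /esym/eqP; rewrite mulrn_eq0 => /eqP.
Qed.

Lemma sum_expr_le2 (x : F) n : 0 <= x -> x *+ 2 <= 1 -> \sum_(i < n) x ^+ i <= 2.
Proof.
move=> x0 x2; suff : \sum_(i < n) x ^+ i <= 2 - 2 * x ^+ n.
  by move/le_trans; apply; rewrite gerDl oppr_le0 mulr_ge0 ?exprn_ge0.
elim: n => [|n IH]; first by rewrite big_ord0 expr0 mulr1 subrr.
rewrite big_ord_recr /= (le_trans (lerD IH (lexx _))) // -addrA lerD2l.
have -> : - (2 * x ^+ n) + x ^+ n = - x ^+ n by ring.
by rewrite lerN2 exprS mulrA -[leRHS]mul1r ler_wpM2r ?exprn_ge0 // mulr_natl.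
Qed.

Lemma eq0_le_mul_small (x K : F) : 0 <= x -> 0 <= K ->
  (forall t, 0 < t -> t *+ 4 <= 1 -> x <= t * K) -> x = 0.
Proof.
move=> x0 K0 small; have [//|xn0] := eqVneq x 0.
have xgt0 : 0 < x by rewrite lt_def xn0.
pose D := (x + K + 1) *+ 4.
have Dgt0 : 0 < D by rewrite pmulrn_lgt0 // ltr_wpDl // addr_ge0.
have t4 : x / D *+ 4 <= 1.
  rewrite -mulrnAl ler_pdivrMr // mul1r lerMn2r /=.
  by rewrite -addrA lerDl addr_ge0.
have := small _ (divr_gt0 xgt0 Dgt0) t4.
rewrite mulrAC -mulrA ler_pMr // ler_pdivlMr // mul1r => DleK.
suff /lt_le_trans/(_ DleK) : K < D by rewrite ltxx.
have y0 : 0 <= x + K + 1 by rewrite !addr_ge0.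
apply: (@lt_le_trans _ _ (x + K + 1)); first by rewrite -addrA ltr_wpDl ?ltrDl.
exact: (ler_wpMn2l y0 (isT : (1 <= 4)%N)).
Qed.

Lemma norm_sum_tail_le {c : nat -> F} {M t : F} N :
  (forall k, `|c k| <= M * 2 ^+ k) -> 0 <= t -> t *+ 4 <= 1 ->
  `|\sum_(k < N) c k.+2 * t ^+ k.+2| <= M * 8 * t ^+ 2.
Proof.
move=> cM t0 t4.
have M0 : 0 <= M by have := cM 0%N; rewrite expr0 mulr1; exact: le_trans.
have t2 : 0 <= 2 * t by rewrite mulr_ge0.
apply: (le_trans (ler_norm_sum _ _ _)).
apply: (@le_trans _ _ (\sum_(k < N) M * (2 * t) ^+ 2 * (2 * t) ^+ k)).
  apply: ler_sum => k _.
  have -> : M * (2 * t) ^+ 2 * (2 * t) ^+ k = M * 2 ^+ k.+2 * t ^+ k.+2.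
    by rewrite -mulrA -exprD add2n exprMn mulrA.
  by rewrite normrM normrX (ger0_norm t0) ler_wpM2r ?exprn_ge0.
rewrite -mulr_sumr (_ : M * 8 * t ^+ 2 = M * (2 * t) ^+ 2 * 2); last by ring.
rewrite ler_wpM2l ?mulr_ge0 ?exprn_ge0 // sum_expr_le2 //.
by rewrite mulr_natl -mulrnA.
Qed.
End NumFacts.

Section Unimodular.
Context {C : numClosedFieldType}.

Lemma unimodular_align (A B : C) : A != 0 ->
  exists2 e : C, `|e| = 1 & e * B = A * (`|B| / `|A|).
Proof.
move=> A0; have nA : `|A| != 0 by rewrite normr_eq0.
have [->|B0] := eqVneq B 0; first by exists 1; rewrite ?normr1 // !(mulr0, normr0, mul0r).
have nB : `|B| != 0 by rewrite normr_eq0.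
exists ((A / `|A|) * (`|B| / B)).
  by rewrite !normrM !normfV !normr_id !mulfV // mulr1.
by rewrite -mulrA divfK // mulrAC -mulrA.
Qed.

Lemma exists_unimodular_normD (A B : C) :
  exists2 e : C, `|e| = 1 & `|A + e * B| = `|A| + `|B|.
Proof.
have [->|A0] := eqVneq A 0.
  by exists 1; rewrite ?normr1 // mul1r !add0r normr0 add0r.
have [e e1 eB] := unimodular_align A B A0; exists e => //.
have nA : `|A| != 0 by rewrite normr_eq0.
have -> : A + e * B = (A / `|A|) * (`|A| + `|B|).
  by rewrite eB mulrDr divfK // mulrAC -mulrA.
by rewrite normrM normrM normfV normr_id mulfV // mul1r ger0_norm ?addr_ge0.
Qed.

Lemma exists_unimodular_normB (A B : C) :
  exists2 e : C, `|e| = 1 & `|A + e * B| = `| `|A| - `|B| |.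
Proof.
have [->|A0] := eqVneq A 0.
  by exists 1; rewrite ?normr1 // mul1r add0r normr0 sub0r normrN normr_id.
have [e e1 eB] := unimodular_align A B A0; exists (- e); first by rewrite normrN.
have nA : `|A| != 0 by rewrite normr_eq0.
have -> : A + - e * B = (A / `|A|) * (`|A| - `|B|).
  by rewrite mulNr eB mulrBr divfK // mulrAC -mulrA.
by rewrite normrM normrM normfV normr_id mulfV // mul1r.
Qed.
End Unimodular.

Section TaylorCoefficients.
Context {R : realType}.
Implicit Types (f g h : disk R -> R[i]) (a b c : nat -> R[i]).

Lemma normr0_lt1 : `|0 : R[i]| < 1.
Proof. by rewrite normr0 ltr01. Qed.

Definition disk_pt {z : R[i]} (hz : `|z| < 1) : disk R := exist _ z hz.

Definition disk0 : disk R := disk_pt normr0_lt1.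

Lemma cvg_eventually_eq (u : nat -> R[i]) (l c : R[i]) :
  u @ \oo --> l -> (\forall N \near \oo, u N = c) -> l = c.
Proof.
by move=> ul uc; exact: (cvg_unique (@norm_hausdorff _ R[i]^o) ul (cvg_near_cst c uc)).
Qed.

Lemma taylor_coefs_at0 {f a} : taylor_coefs f a -> f disk0 = a 0%N.
Proof.
move=> fa; apply: cvg_eventually_eq (fa disk0) _; near=> N.
have [k ->] : exists k, N = k.+1 by exists N.-1; rewrite prednK //; near: N; exists 1%N.
rewrite big_ord_recl expr0 mulr1 big1 ?addr0 // => i _.
by rewrite /= expr0n mulr0.
Unshelve. all: by end_near. Qed.

Lemma taylor_coefs_eq0 {f a} : taylor_coefs f a -> (forall k, a k = 0) -> f =1 fun=> 0.
Proof.
move=> fa a0 z; apply: cvg_eventually_eq (fa z) _.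
by apply: nearW => N; rewrite big1 // => k _; rewrite a0 mul0r.
Qed.

Lemma taylor_coefsDZ {h g a b} (e : R[i]) :
  taylor_coefs h a -> taylor_coefs g b ->
  taylor_coefs (fun z => h z + e * g z) (fun k => a k + e * b k).
Proof.
move=> ha gb z.
have -> : (fun N => \sum_(k < N) (a k + e * b k) * sval z ^+ k) =
    (fun N => \sum_(k < N) a k * sval z ^+ k + e * \sum_(k < N) b k * sval z ^+ k).
  apply/funext => N; rewrite mulr_sumr -big_split.
  by apply: eq_bigr => k _; rewrite mulrDl mulrA.
by apply: (@cvgD _ R[i]^o); [exact: ha | apply: cvgMr; exact: gb].
Qed.

Lemma coef_geometric_bound {f c} : taylor_coefs f c ->
  exists2 M, 0 <= M & forall k, `|c k| <= M * 2 ^+ k.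
Proof.
move=> fc.
have half : `|2^-1 : R[i]| < 1.
  by rewrite ger0_norm ?invr_ge0 ?ler0n // invf_lt1 ?ltr0n // ltr1n.
have u0 : (fun k => c k * 2^-1 ^+ k) @ \oo --> (0 : R[i]^o).
  apply: (@cvg_series_cvg_0 _ R[i]^o); apply/cvg_ex; exists (f (disk_pt half)).
  have -> : series (fun k => c k * 2^-1 ^+ k) = fun N => \sum_(k < N) c k * 2^-1 ^+ k.
    by apply/funext => N; rewrite /series /= big_mkord.
  exact: fc (disk_pt half).
have [|M uM] := (ex_bound _).1 (@cvg_seq_bounded _ R[i]^o _ (cvgP _ u0)).
  exact: (@globally_properfilter _ _ 0%N).
exists M; first exact: le_trans (uM 0%N I).
move=> k; have := uM k I; rewrite /= normrM normrX normfV normr_nat exprVn.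
by rewrite ler_pdivrMr ?exprn_gt0 ?ltr0n.
Qed.

Lemma taylor_coefs0_coef1 {c} : taylor_coefs (fun=> 0) c -> c 1%N = 0.
Proof.
move=> hc; have c0 : c 0%N = 0 by rewrite -(taylor_coefs_at0 hc).
have [M M0 cM] := coef_geometric_bound hc.
apply/normr0_eq0/(@eq0_le_mul_small _ _ (1 + M * 8)) => //.
  by rewrite addr_ge0 ?mulr_ge0.
move=> t t0 t4.
have tD : `|t| < 1.
  by rewrite ger0_norm ?ltW // (lt_le_trans _ t4) // -[ltLHS]mulr1n ltr_pMn2l.
have /(@cvgrPdist_lt _ R[i]^o) /(_ (t ^+ 2) (exprn_gt0 _ t0)) := hc (disk_pt tD).
move=> [N _ /(_ N.+2 (leqW (leqW (leqnn N))))] /=.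
rewrite sub0r normrN -(big_mkord xpredT (fun k => c k * t ^+ k)).
rewrite 2?big_nat_recl // big_mkord c0 mul0r add0r expr1.
set S := \sum_(i < N) _ => hS.
rewrite -(ler_pM2r t0) (_ : t * (1 + M * 8) * t = t ^+ 2 + M * 8 * t ^+ 2); last by ring.
apply: (le_trans _ (lerD (ltW hS) (norm_sum_tail_le N cM (ltW t0) t4))).
by rewrite -{1}(ger0_norm (ltW t0)) -normrM -[X in `|X| <= _](addrK S) ler_normB.
Qed.

Lemma taylor_coefs_coef1_uniq {f a b} :
  taylor_coefs f a -> taylor_coefs f b -> a 1%N = b 1%N.
Proof.
move=> fa fb; apply/eqP; rewrite -subr_eq0; apply/eqP.
have := taylor_coefsDZ (-1) fa fb.
have -> : (fun z => f z + -1 * f z) = fun=> 0 by apply/funext => z; rewrite mulN1r subrr.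
by move/taylor_coefs0_coef1; rewrite mulN1r.
Qed.

Lemma classS_at0 {f} : classS f -> f disk0 = 0.
Proof. by move=> [_ [a [fa [a0 _]]]]; rewrite (taylor_coefs_at0 fa). Qed.

Lemma classS_coef1 {f a} : classS f -> taylor_coefs f a -> a 1%N = 1.
Proof. by move=> [_ [b [fb [_ b1]]]] fa; rewrite (taylor_coefs_coef1_uniq fa fb). Qed.

Lemma harmonic_analogue_coef01 {G : (disk R -> R[i]) -> Prop} {h g a b} :
  (forall f, G f -> classS f) -> harmonic_analogue G h g ->
  taylor_coefs h a -> taylor_coefs g b -> b 0%N = 0 /\ b 1%N = 0.
Proof.
move=> GS [_ [_ HG]] ha gb.
have Sp := GS _ (HG 1 (normr1 _)); have Sm := GS _ (HG (-1) (normrN1 _)).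
split.
  rewrite -(taylor_coefs_at0 gb); apply: (@addr_eq_subr_eq0 _ (h disk0)).
  by move: (classS_at0 Sp) (classS_at0 Sm); rewrite mul1r mulN1r => -> ->.
apply: (@addr_eq_subr_eq0 _ (a 1%N)).
move: (classS_coef1 Sp (taylor_coefsDZ 1 ha gb))
      (classS_coef1 Sm (taylor_coefsDZ (-1) ha gb)).
by rewrite mul1r mulN1r => -> ->.
Qed.

End TaylorCoefficients.

Theorem theorem2p5 (R : realType) (G : (disk R -> R[i]) -> Prop)
    (p : nat -> R)
    (HGS : forall f, G f -> classS f)
    (Hp : forall f a, G f -> taylor_coefs f a ->
            forall n : nat, (2 <= n)%N -> `|a n| <= (p n)%:C) :
  (forall h g A B, harmonic_analogue G h g ->
      taylor_coefs h A -> taylor_coefs g B ->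
      forall n : nat, (2 <= n)%N -> `| `|A n| - `|B n| | <= (p n)%:C)
  /\
  (forall h0 a0, G h0 -> taylor_coefs h0 a0 ->
      (forall n : nat, (2 <= n)%N -> `|a0 n| = (p n)%:C) ->
      forall g0, analytic_disk g0 ->
        (harmonic_analogue G h0 g0 <-> forall z, g0 z = 0)).
Proof.
split=> [h g A B [_ [_ HG]] hA gB n n2 | h0 a0 Gh0 ha0 hp g0 g0_an].
  have [e e1 <-] := exists_unimodular_normB (A n) (B n).
  exact: Hp _ _ (HG e e1) (taylor_coefsDZ e hA gB) n n2.
split=> [hG | g00].
  have [b gb] := g0_an.
  have [b0 b1] := harmonic_analogue_coef01 HGS hG ha0 gb.
  apply: (taylor_coefs_eq0 gb) => -[|[|n]] //.
  have [e e1 hD] := exists_unimodular_normD (a0 n.+2) (b n.+2).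
  have := Hp _ _ (hG.2.2 e e1) (taylor_coefsDZ e ha0 gb) n.+2 isT.
  by rewrite hD -(hp n.+2 isT) gerDl normr_le0 => /eqP.
split; first by exists a0.
split=> // e _.
have -> : (fun z => h0 z + e * g0 z) = h0 by apply/funext => z; rewrite g00 mulr0 addr0.
exact: Gh0.
Qed.
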